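(* For any positive integers $n,p$, there exists an $n$-node directed weighted graph $G$ and a set $P$ of $|P|\le p$ demand pairs that is independent in $G$, such that the minimal distance preserver of $G,P$ has exactly $\mathtt{DP}(n,p)$ edges.
   Context: For a directed graph $G=(V,E,w)$ with nonnegative real edge weights and a set $P\subseteq V\times V$ of demand pairs, a distance preserver is a subgraph $H\subseteq G$ with $\mathrm{dist}_H(s,t)=\mathrm{dist}_G(s,t)$ for all $(s,t)\in P$. $\mathtt{DP}(n,p)$ is the least integer such that every $n$-node such graph and every set of $|P|=p$ demand pairs has a distance preserver on at most $\mathtt{DP}(n,p)$ edges. $P$ is independent in $G$ if every $(s,t)\in P$ has a unique shortest $s\leadsto t$ path in $G$ and these shortest paths are pairwise edge-disjoint. *)

From HB Require Import structures.
From mathcomp Require Import all_boot all_order all_algebra.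
From mathcomp Require Import boolp classical_sets reals constructive_ereal ereal.
Set Implicit Arguments. Unset Strict Implicit. Unset Printing Implicit Defensive.
Import Order.TTheory GRing.Theory Num.Theory.
Local Open Scope ring_scope.
Local Open Scope classical_set_scope.

(* A directed graph on the n nodes 'I_n is given by an edge set
   E : {set 'I_n * 'I_n} together with a weight function w (only its values
   on E matter); the graph has nonnegative weights when w is nonnegative on E.
   A subgraph H of G = (E, w) is given by a subset F of E with the same w. *)

Section Graphs.
Variables (R : realType) (n : nat).
Notation V := 'I_n.

Definition nonneg_weights (E : {set V * V}) (w : V -> V -> R) : Prop :=
  forall e, e \in E -> 0 <= w e.1 e.2.

(* The trivial path [:: s] is the path from s to s. *)
Definition is_spath (E : {set V * V}) (s t : V) (vs : seq V) : bool :=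
  [&& path (fun u v => (u, v) \in E) s vs, uniq (s :: vs) & last s vs == t].

Definition pedges (s : V) (vs : seq V) : seq (V * V) := zip (s :: vs) vs.

Definition pweight (w : V -> V -> R) (s : V) (vs : seq V) : R :=
  \sum_(e <- pedges s vs) w e.1 e.2.

Definition dist (E : {set V * V}) (w : V -> V -> R) (s t : V) : \bar R :=
  ereal_inf [set (pweight w s vs)%:E | vs in [set vs | is_spath E s t vs]].

Definition is_preserver (E : {set V * V}) (w : V -> V -> R)
    (P : {set V * V}) (F : {set V * V}) : Prop :=
  F \subset E /\ forall q, q \in P -> dist F w q.1 q.2 = dist E w q.1 q.2.

Definition DP_bound (p k : nat) : Prop :=
  forall (E : {set V * V}) (w : V -> V -> R) (P : {set V * V}),
    nonneg_weights E w -> #|P| = p ->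
    exists F, is_preserver E w P F /\ (#|F| <= k)%N.

Lemma DP_bound_ex (p : nat) : exists k, `[< DP_bound p k >].
Proof.
exists #|{: V * V}|; apply/asboolP => E w P _ _; exists E; split; last exact: max_card.
by split => //; apply: subxx.
Qed.

Definition DP (p : nat) : nat := ex_minn (DP_bound_ex p).

Definition is_shortest (E : {set V * V}) (w : V -> V -> R) (s t : V)
    (vs : seq V) : Prop :=
  is_spath E s t vs /\ (pweight w s vs)%:E = dist E w s t.

Definition independent (E : {set V * V}) (w : V -> V -> R)
    (P : {set V * V}) : Prop :=
  (forall q, q \in P -> exists vs, is_shortest E w q.1 q.2 vs /\
       forall vs', is_shortest E w q.1 q.2 vs' -> vs' = vs) /\
  (forall q q', q \in P -> q' \in P -> q != q' ->
     forall vs vs', is_shortest E w q.1 q.2 vs -> is_shortest E w q'.1 q'.2 vs' ->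
     forall e, e \in pedges q.1 vs -> e \notin pedges q'.1 vs').

End Graphs.

From HB Require Import structures.
From mathcomp Require Import all_boot all_order all_algebra zify lra.
From mathcomp Require Import boolp classical_sets reals constructive_ereal ereal.
Set Implicit Arguments. Unset Strict Implicit. Unset Printing Implicit Defensive.
Import Order.TTheory GRing.Theory Num.Theory.
Local Open Scope ring_scope.

(* Perturbing the weights by [d * 2 ^ rank e] for a small [d > 0] makes all
   weights positive and all shortest paths unique, while keeping every
   shortest path shortest for the original weights.  Start from an instance
   whose preservers all have at least DP(n,p) edges, and a preserver H with at
   most DP(n,p) edges.  Inside H, add the (perturbed) shortest paths of the
   demand pairs one after the other; in the k-th path, call new the edges not
   used by the earlier paths, and collapse every maximal run "new edge, then
   old edges" into a single edge weighted by the distance between its ends.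
   The collapsed paths, taken from their first new edge, have as many edges in
   total as the union F of the shortest paths, which is a preserver inside H
   and hence has exactly DP(n,p) edges.  Because shortest paths are unique,
   the collapsed paths are edge-disjoint unique shortest paths of their union:
   they form an independent instance, and each of its preservers must keep
   all of its DP(n,p) edges. *)

Section PathEdges.
Variable n : nat.
Local Notation V := 'I_n.
Implicit Types (x : V) (vs : seq V).

Lemma pedges_cons x v vs : pedges x (v :: vs) = (x, v) :: pedges v vs.
Proof. by []. Qed.

Lemma size_pedges x vs : size (pedges x vs) = size vs.
Proof. by rewrite size_zip /=; apply/minn_idPr. Qed.

Lemma pedges_cat x a b : pedges x (a ++ b) = pedges x a ++ pedges (last x a) b.
Proof. by elim: a x => [|u a IH] x //=; rewrite pedges_cons IH. Qed.

Lemma path_pedges (r : rel V) x vs :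
  path r x vs = all (fun e => r e.1 e.2) (pedges x vs).
Proof. by elim: vs x => [|u vs IH] x //=; rewrite IH. Qed.

Lemma mem_pedges x vs e : e \in pedges x vs -> e.1 \in x :: vs /\ e.2 \in vs.
Proof.
elim: vs x => [|u vs IH] x //; rewrite pedges_cons in_cons.
case/orP => [/eqP -> | /IH [h1 h2]]; first by rewrite !mem_head.
by split; rewrite in_cons ?h1 ?h2 orbT.
Qed.

Lemma uniq_pedges x vs : uniq (x :: vs) -> uniq (pedges x vs).
Proof. exact: zip_uniql. Qed.

Lemma uniq_pedges_succ x vs a b c :
  uniq (x :: vs) -> (a, b) \in pedges x vs -> (a, c) \in pedges x vs -> b = c.
Proof.
elim: vs x => [|u vs IH] x //= /andP [xn un].
rewrite pedges_cons !in_cons.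
have notx e : e \in pedges u vs -> e.1 != x.
  by move=> /mem_pedges [/= h _]; apply: contraNneq xn => <-.
case/orP => [/eqP [ax ->] | h1]; case/orP => [/eqP [ax' ->] | h2] //.
- by move: (notx _ h2); rewrite /= ax eqxx.
- by move: (notx _ h1); rewrite /= ax' eqxx.
- exact: IH h1 h2.
Qed.

Lemma sub_pedges_eq x vs1 vs2 :
  uniq (x :: vs1) -> uniq (x :: vs2) -> last x vs1 = last x vs2 ->
  {subset pedges x vs1 <= pedges x vs2} -> vs1 = vs2.
Proof.
elim: vs1 x vs2 => [|u r1 IH] x [|v r2] //=.
- by move=> _ /andP [xn _] el _; move: xn; rewrite el mem_last.
- by move=> _ _ _ /(_ (x, u)); rewrite pedges_cons mem_head => /(_ isT).
move=> /andP [xn1 u1] /andP [xn2 u2] el sub.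
have /sub : (x, u) \in pedges x (u :: r1) by rewrite pedges_cons mem_head.
rewrite pedges_cons in_cons => /orP [/eqP [uv] | /mem_pedges [/= xr2 _]]; last first.
  by rewrite xr2 in xn2.
subst v; congr (_ :: _); apply: (IH u) => // e he.
have /sub : e \in pedges x (u :: r1) by rewrite pedges_cons in_cons he orbT.
rewrite pedges_cons in_cons => /orP [/eqP ee | //]; subst e.
by have [/= e1 _] := mem_pedges he; rewrite e1 in xn1.
Qed.

Lemma uniq_last_cat x a b : uniq (x :: a ++ b) -> uniq (last x a :: b).
Proof.
rewrite -cat_cons cat_uniq => /and3P [_ hn ub] /=; rewrite ub andbT.
by apply: contra hn => hb; apply/hasP; exists (last x a) => //; exact: mem_last.
Qed.

End PathEdges.

Section Walks.
Variables (R : realType) (n : nat).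
Local Notation V := 'I_n.
Implicit Types (E : {set V * V}) (w : V -> V -> R) (x : V) (vs : seq V).

Definition walk E x vs := path (fun u v => (u, v) \in E) x vs.

Lemma is_spathP E s t vs :
  reflect [/\ walk E s vs, uniq (s :: vs) & last s vs = t] (is_spath E s t vs).
Proof. by apply: (iffP and3P) => -[w u /eqP l]; split. Qed.

Lemma pweight_nil w x : pweight w x [::] = 0.
Proof. by rewrite /pweight big_nil. Qed.

Lemma pweight_cons w x v vs : pweight w x (v :: vs) = w x v + pweight w v vs.
Proof. by rewrite /pweight pedges_cons big_cons. Qed.

Lemma pweight_cat w x a b :
  pweight w x (a ++ b) = pweight w x a + pweight w (last x a) b.
Proof. by rewrite /pweight pedges_cat big_cat. Qed.

Lemma walk_cat E x a b : walk E x (a ++ b) = walk E x a && walk E (last x a) b.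
Proof. exact: cat_path. Qed.

Lemma walk_edge E x vs e : walk E x vs -> e \in pedges x vs -> e \in E.
Proof. by rewrite /walk path_pedges => /allP h /h; case: e. Qed.

Lemma pweight_ge0 E w x vs : nonneg_weights E w -> walk E x vs -> 0 <= pweight w x vs.
Proof.
move=> w_ge0 p; rewrite /pweight big_seq; apply: sumr_ge0 => e he.
exact/w_ge0/(walk_edge p).
Qed.

Lemma sub_spath E (F : {set V * V}) (s t : V) vs :
  F \subset E -> is_spath F s t vs -> is_spath E s t vs.
Proof.
move=> /fintype.subsetP FE /is_spathP [p u l]; apply/is_spathP; split => //.
by apply: sub_path p => a b /FE.
Qed.

Lemma nonneg_weights_sub E (F : {set V * V}) w :
  F \subset E -> nonneg_weights E w -> nonneg_weights F w.
Proof. by move=> /fintype.subsetP FE w_ge0 e /FE; apply: w_ge0. Qed.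

Lemma preserver_trans E (H F P : {set V * V}) w :
  is_preserver E w P H -> is_preserver H w P F -> is_preserver E w P F.
Proof.
move=> [HE H_dist] [FH F_dist]; split; first exact: fintype.subset_trans FH HE.
by move=> q qP; rewrite F_dist ?H_dist.
Qed.

Section PositiveWeights.
Variables (E : {set V * V}) (w : V -> V -> R).
Hypothesis w_gt0 : forall e, e \in E -> 0 < w e.1 e.2.

Lemma walk_shorten vs x : walk E x vs -> exists vs',
  [/\ is_spath E x (last x vs) vs', {subset vs' <= vs},
      pweight w x vs' <= pweight w x vs &
      ~~ uniq (x :: vs) -> pweight w x vs' < pweight w x vs].
Proof.
have w_ge0 : nonneg_weights E w by move=> e /w_gt0/ltW.
have [k] := ubnP (size vs); elim: k vs x => // k IH vs x szk p.
have [u | nu] := boolP (uniq (x :: vs)).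
  by exists vs; split => //; apply/is_spathP.
have [xin | xnin] := boolP (x \in vs).
  (* cut the closed walk [x :: pre ++ [:: x]], whose weight is positive *)
  case/splitPr: xin szk p nu => pre post szk.
  rewrite walk_cat /= => /and3P [p1 hl p2] _.
  have szp : (size post < k)%N by move: szk; rewrite size_cat /=; lia.
  have [vs' [sp sub le _]] := IH post x szp p2.
  have loop_gt0 : 0 < pweight w x pre + w (last x pre) x.
    by apply: ltr_wpDl; [exact: pweight_ge0 p1 | exact: (w_gt0 hl)].
  have lt : pweight w x vs' < pweight w x (pre ++ x :: post).
    by rewrite pweight_cat pweight_cons addrA; apply: le_lt_trans le _; rewrite ltrDr.
  exists vs'; split => //; last exact: ltW.
  - by rewrite last_cat.
  - by move=> y /sub hy; rewrite mem_cat in_cons hy !orbT.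
case: vs szk p nu xnin => [|v r] //= szk /andP [hv p] nu xnin.
have nu' : ~~ uniq (v :: r) by move: nu; rewrite /= xnin.
have [r' [/is_spathP [p' u' l'] sub le lt]] := IH r v szk p.
exists (v :: r'); split.
- apply/is_spathP; split; [exact/andP | | by []].
  rewrite cons_uniq u' andbT; apply: contra xnin.
  by rewrite !in_cons => /orP [-> // | /sub ->]; rewrite orbT.
- by move=> y; rewrite !in_cons => /orP [-> // | /sub ->]; rewrite orbT.
- by rewrite !pweight_cons lerD2l.
- by move=> _; rewrite !pweight_cons ltrD2l; apply: lt.
Qed.

End PositiveWeights.

End Walks.

Section MinimalPaths.
Variables (R : realType) (n : nat).
Local Notation V := 'I_n.
Implicit Types (E : {set V * V}) (w : V -> V -> R) (x s t : V) (vs : seq V).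

Fixpoint seqs_upto (k : nat) : seq (seq V) :=
  if k is k'.+1 then [::] :: [seq x :: vs | x <- enum V, vs <- seqs_upto k']
  else [:: [::]].

Lemma mem_seqs_upto k vs : (size vs <= k)%N -> vs \in seqs_upto k.
Proof.
elim: k vs => [|k IH] [|x vs] //= szk; rewrite in_cons /=.
by apply/allpairsP; exists (x, vs); rewrite mem_enum IH.
Qed.

Lemma size_uniq_path x vs : uniq (x :: vs) -> (size vs < n)%N.
Proof.
move=> u; rewrite -ltnS -[(size vs).+1]/(size (x :: vs)) -(card_uniqP u).
by apply: leq_trans (max_card _) _; rewrite card_ord.
Qed.

Lemma finite_uniq_paths : {l : seq (seq V) | forall x vs, uniq (x :: vs) -> vs \in l}.
Proof. by exists (seqs_upto n) => x vs /size_uniq_path/ltnW; apply: mem_seqs_upto. Qed.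

Lemma seq_argmin (T : eqType) (f : T -> R) (l : seq T) :
  l != [::] -> exists2 y, y \in l & forall z, z \in l -> f y <= f z.
Proof.
elim: l => [|a [|b l] IH] // _.
  by exists a => [|z]; rewrite ?mem_head // mem_seq1 => /eqP ->.
have [y yl ymin] := IH isT.
have [ay | ya] := lerP (f a) (f y).
  exists a; first exact: mem_head.
  by move=> z; rewrite in_cons => /orP [/eqP -> // | /ymin]; apply: le_trans.
exists y; first by rewrite in_cons yl orbT.
by move=> z; rewrite in_cons => /orP [/eqP -> | /ymin //]; apply: ltW.
Qed.

Definition min_spath E w s t vs :=
  is_spath E s t vs /\ forall vs', is_spath E s t vs' -> pweight w s vs <= pweight w s vs'.

Lemma min_spath_dist E w s t vs : min_spath E w s t vs -> dist E w s t = (pweight w s vs)%:E.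
Proof.
move=> [hvs vs_min]; apply/le_anti/andP; split; first by apply: ereal_inf_lbound; exists vs.
by apply: le_ereal_inf_tmp => _ [vs' hvs' <-]; rewrite lee_fin; apply: vs_min.
Qed.

Lemma dist_unreachable E w s t : (forall vs, ~~ is_spath E s t vs) -> dist E w s t = +oo%E.
Proof.
move=> none; apply/le_anti; rewrite leey /=.
by apply: le_ereal_inf_tmp => y [vs hvs _]; move/negP: (none vs).
Qed.

Lemma exists_min_spath E w s t vs :
  is_spath E s t vs -> exists vs0, min_spath E w s t vs0.
Proof.
move=> hvs; have [all_paths all_pathsP] := finite_uniq_paths.
pose l := [seq vs' <- all_paths | is_spath E s t vs'].
have inl vs' : is_spath E s t vs' -> vs' \in l.
  by move=> h; rewrite mem_filter h; case/is_spathP: h => _ /all_pathsP.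
have l_nil : l != [::] by apply: contraTneq (inl _ hvs) => ->.
have [vs0 + vs0_min] := seq_argmin (pweight w s) l_nil.
by rewrite mem_filter => /andP [h0 _]; exists vs0; split => // vs' /inl /vs0_min.
Qed.

End MinimalPaths.

Definition sum_pow2 (l : seq nat) : nat := sumn [seq (2 ^ i)%N | i <- l].

Definition halve_exps (l : seq nat) : seq nat := [seq i.-1 | i <- l & (0 < i)%N].

Lemma mem_halve_exps l i : (i \in halve_exps l) = (i.+1 \in l).
Proof.
apply/mapP/idP => [[j] | il]; last by exists i.+1; rewrite ?mem_filter.
by rewrite mem_filter => /andP [j_gt0 jl] ->; rewrite prednK.
Qed.

Lemma uniq_halve_exps l : uniq l -> uniq (halve_exps l).
Proof.
move=> ul; rewrite map_inj_in_uniq ?filter_uniq // => i j.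
by rewrite !mem_filter => /andP [i_gt0 _] /andP [j_gt0 _] eq_ij; rewrite -[i]prednK // eq_ij prednK.
Qed.

Lemma sum_pow2_halve l : sum_pow2 l = (count_mem 0%N l + 2 * sum_pow2 (halve_exps l))%N.
Proof.
elim: l => [|[|i] l IH] //; rewrite /sum_pow2 /halve_exps /= -/(sum_pow2 l) IH;
  rewrite -/(halve_exps l) -/(sum_pow2 (halve_exps l)).
  by rewrite addnA.
by rewrite expnS mulnDr add0n addnCA.
Qed.

Lemma mem_sum_pow2 l i : uniq l -> (i \in l) = odd (sum_pow2 l %/ 2 ^ i)%N.
Proof.
elim: i l => [|i IH] l ul; rewrite sum_pow2_halve (count_uniq_mem _ ul).
  by rewrite expn0 divn1 oddD oddM /= addbF oddb.
rewrite -mem_halve_exps IH ?uniq_halve_exps // expnS divnMA; congr (odd (_ %/ _)).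
by case: (0%N \in l) => /=; lia.
Qed.

Lemma sum_pow2_inj l1 l2 : uniq l1 -> uniq l2 -> sum_pow2 l1 = sum_pow2 l2 -> l1 =i l2.
Proof. by move=> u1 u2 e i; rewrite !mem_sum_pow2 // e. Qed.

Section TieBreaking.
Variables (R : realType) (n : nat).
Local Notation V := 'I_n.
Implicit Types (E : {set V * V}) (w : V -> V -> R) (x s t : V) (vs : seq V).

Definition edge_rank (e : V * V) : nat := enum_rank e.

Definition edge_code x vs : nat := sum_pow2 [seq edge_rank e | e <- pedges x vs].

Definition perturb w (d : R) (u v : V) : R := w u v + d * (2 ^ edge_rank (u, v))%:R.

Lemma pweight_perturb w d x vs :
  pweight (perturb w d) x vs = pweight w x vs + d * (edge_code x vs)%:R.
Proof.
rewrite /pweight /perturb big_split /= /edge_code /sum_pow2 -map_comp sumnE big_map.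
by rewrite natr_sum mulr_sumr; congr (_ + _); apply: eq_bigr => -[].
Qed.

Lemma edge_code_le x vs : (edge_code x vs <= size vs * 2 ^ #|{: V * V}|)%N.
Proof.
elim: vs x => [|v vs IH] x //; rewrite /edge_code pedges_cons /= mulSn -/(edge_code v vs).
by apply: leq_add (IH v); rewrite leq_pexp2l // ltnW // /edge_rank ltn_ord.
Qed.

Lemma edge_code_inj E s t vs vs' :
  is_spath E s t vs -> is_spath E s t vs' -> edge_code s vs = edge_code s vs' -> vs = vs'.
Proof.
move=> /is_spathP [_ u l] /is_spathP [_ u' l'] /sum_pow2_inj.
have rank_inj : injective edge_rank by move=> a b /ord_inj/enum_rank_inj.
rewrite !map_inj_uniq ?uniq_pedges // => /(_ isT isT) same.
apply: sub_pedges_eq u u' _ _; first by rewrite l l'.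
by move=> e; rewrite -(mem_map rank_inj) same (mem_map rank_inj).
Qed.

Lemma exists_gap (ps : seq (R * R)) :
  exists2 g, 0 < g & forall p, p \in ps -> p.1 < p.2 -> g <= p.2 - p.1.
Proof.
elim: ps => [|p ps [g g_gt0 gap]]; first by exists 1.
have [lt | le] := ltP p.1 p.2; last first.
  by exists g => // q; rewrite in_cons => /orP [/eqP -> | /gap //]; rewrite ltNge le.
exists (Num.min g (p.2 - p.1)); first by rewrite lt_min g_gt0 subr_gt0.
move=> q; rewrite in_cons => /orP [/eqP -> _ | /gap qgap /qgap]; rewrite ge_min ?lexx ?orbT //.
by move=> ->.
Qed.

Lemma tie_breaking_weights E w : nonneg_weights E w -> exists om : V -> V -> R,
  [/\ forall e, e \in E -> 0 < om e.1 e.2,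
      forall s t vs vs', is_spath E s t vs -> is_spath E s t vs' ->
        pweight om s vs <= pweight om s vs' -> pweight w s vs <= pweight w s vs' &
      forall s t vs vs', is_spath E s t vs -> is_spath E s t vs' ->
        pweight om s vs = pweight om s vs' -> vs = vs'].
Proof.
move=> w_ge0; have [all_paths all_pathsP] := finite_uniq_paths n.
pose L := [seq pweight w x vs | x <- enum V, vs <- all_paths].
have [g g_gt0 gap] := exists_gap [seq (a, b) | a <- L, b <- L].
have inL x vs : uniq (x :: vs) -> pweight w x vs \in L.
  by move=> u; apply/allpairsP; exists (x, vs); rewrite mem_enum (all_pathsP x).
(* [d * edge_code] stays below every positive gap between weights of simple paths. *)
pose T := (n * 2 ^ #|{: V * V}|)%N; pose d := g / T.+1%:R.
have d_gt0 : 0 < d by rewrite divr_gt0 // ltr0n.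
have code_small x vs : uniq (x :: vs) -> d * (edge_code x vs)%:R < g.
  move=> u; rewrite /d mulrAC ltr_pdivrMr ?ltr0n // ltr_pM2l // ltr_nat ltnS.
  by apply: leq_trans (edge_code_le x vs) _; rewrite leq_mul2r (ltnW (size_uniq_path u)) orbT.
have reflect_le s t vs vs' : is_spath E s t vs -> is_spath E s t vs' ->
    pweight (perturb w d) s vs <= pweight (perturb w d) s vs' ->
    pweight w s vs <= pweight w s vs'.
  move=> /is_spathP [_ u _] /is_spathP [_ u' _]; rewrite !pweight_perturb => le.
  rewrite leNgt; apply/negP => lt.
  have /gap/(_ lt) /= : (pweight w s vs', pweight w s vs) \in [seq (a, b) | a <- L, b <- L].
    by apply/allpairsP; exists (pweight w s vs', pweight w s vs); split; rewrite ?inL.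
  have := code_small _ _ u'; have : 0 <= d * (edge_code s vs)%:R by rewrite mulr_ge0 ?ler0n ?ltW.
  lra.
exists (perturb w d); split => //.
- move=> e eE; apply: ltr_wpDl; first exact: w_ge0.
  by rewrite mulr_gt0 // ltr0n expn_gt0.
- move=> s t vs vs' h h' eq_om; apply: (edge_code_inj h h').
  have eq_w : pweight w s vs = pweight w s vs'.
    by apply/le_anti; rewrite (reflect_le _ _ _ _ h h') ?eq_om // (reflect_le _ _ _ _ h' h) ?eq_om.
  move: eq_om; rewrite !pweight_perturb eq_w => /addrI /(mulfI (lt0r_neq0 d_gt0)).
  by move/eqP; rewrite eqr_nat => /eqP.
Qed.

End TieBreaking.

Section UniqueShortestPaths.
Variables (R : realType) (n : nat).
Local Notation V := 'I_n.
Variables (E : {set V * V}) (om : V -> V -> R).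
Hypothesis om_gt0 : forall e, e \in E -> 0 < om e.1 e.2.
Hypothesis om_inj : forall s t vs vs', is_spath E s t vs -> is_spath E s t vs' ->
  pweight om s vs = pweight om s vs' -> vs = vs'.
Local Notation min_spath := (min_spath E om).

Lemma min_spath_uniq x y a b : min_spath x y a -> min_spath x y b -> a = b.
Proof. by move=> [ha amin] [hb bmin]; apply: (om_inj ha hb); apply/le_anti; rewrite amin ?bmin. Qed.

Lemma min_spath_le_walk x W vs :
  walk E x W -> min_spath x (last x W) vs -> pweight om x vs <= pweight om x W.
Proof.
move=> hW [_ vs_min]; have [W' [hW' _ le _]] := walk_shorten om_gt0 hW.
exact: le_trans (vs_min _ hW') le.
Qed.

Lemma walk_eq_min_spath x W vs : walk E x W -> min_spath x (last x W) vs ->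
  pweight om x W <= pweight om x vs -> W = vs.
Proof.
move=> hW [hvs vs_min] le; have [W' [hW' _ _ lt]] := walk_shorten om_gt0 hW.
have [u | nu] := boolP (uniq (x :: W)).
  have spW : is_spath E x (last x W) W by apply/is_spathP.
  by apply: (om_inj spW hvs); apply/le_anti; rewrite le vs_min.
by have := lt_le_trans (le_lt_trans (vs_min _ hW') (lt nu)) le; rewrite ltxx.
Qed.

Lemma min_spath_infix x y a b c :
  min_spath x y (a ++ b ++ c) -> min_spath (last x a) (last (last x a) b) b.
Proof.
move=> [habc abc_min]; case/is_spathP: (habc) => + u l.
rewrite !walk_cat => /and3P [wa wb wc].
set z := last x a.
have ub : uniq (z :: b) by move: (uniq_last_cat u); rewrite -cat_cons cat_uniq => /andP [].
split; first exact/is_spathP.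
move=> b' /is_spathP [wb' _ lb'].
have wW : walk E x (a ++ b' ++ c) by rewrite !walk_cat wa lb' wc andbT.
have lW : last x (a ++ b' ++ c) = y by rewrite !last_cat -/z lb' -l !last_cat.
have := min_spath_le_walk wW; rewrite lW => /(_ _ (conj habc abc_min)).
by rewrite !pweight_cat -/z lb' lerD2l lerD2r.
Qed.

End UniqueShortestPaths.

Section Contraction.
Variables (R : realType) (n : nat).
Local Notation V := 'I_n.
Variable old : {set V * V}.
Local Notation new e := (e \notin old).

Lemma split_old_prefix x (vs : seq V) : exists pre rest,
  [/\ vs = pre ++ rest, all (mem old) (pedges x pre) &
      rest = [::] \/ new (last x pre, head (last x pre) rest)].
Proof.
elim: vs x => [|u vs IH] x; first by exists [::], [::]; split => //; left.
have [xu_old | xu_new] := boolP ((x, u) \in old).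
  by have [pre [rest [-> pre_old rest_new]]] := IH u; exists (u :: pre), rest; rewrite /= xu_old.
by exists [::], (u :: vs); split => //; right.
Qed.

Lemma count_new_old (l : seq (V * V)) : all (mem old) l -> count (fun e => new e) l = 0%N.
Proof.
by move=> /allP l_old; apply/eqP; rewrite eqn0Ngt -has_count; apply/hasPn => e /l_old; rewrite negbK.
Qed.

Lemma subseq_last_cons (x : V) pre rest cs :
  subseq cs rest -> subseq (last x pre :: cs) (x :: pre ++ rest).
Proof.
case/lastP: pre => [|pre u] sub; first by rewrite /= eqxx.
rewrite last_rcons -cats1 -catA -cat_cons; apply: subseq_trans (suffix_subseq _ _).
by rewrite /= eqxx.
Qed.

(* [x :: cs] is [x :: vs] with each maximal run "new edge, then old edges"
   collapsed into a single edge. *)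
Lemma exists_block_contraction (g om : V -> V -> R) x vs :
  (vs = [::] \/ new (x, head x vs)) ->
  (forall pre B post, vs = pre ++ B ++ post -> B != [::] ->
     g (last x pre) (last (last x pre) B) = pweight om (last x pre) B) ->
  exists cs, [/\ subseq cs vs /\ last x cs = last x vs,
    size cs = count (fun e => new e) (pedges x vs),
    forall a b, (a, b) \in pedges x cs -> exists pre B post,
      [/\ vs = pre ++ B ++ post, last x pre = a, last a B = b, B != [::] &
          new (a, head a B)],
    forall a, a \in x :: cs -> a != last x cs -> exists2 z,
      (a, z) \in pedges x vs & new (a, z) &
    pweight g x cs = pweight om x vs].
Proof.
have [k] := ubnP (size vs); elim: k vs x => // k IH [|v r] x szk first_new g_block.
  exists [::]; split => //; last by rewrite !pweight_nil.
  by move=> a; rewrite mem_seq1 => /eqP ->; rewrite eqxx.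
have xv_new : new (x, v) by case: first_new.
have [pre [rest [er pre_old rest_new]]] := split_old_prefix v r; subst r; set y := last v pre.
have szr : (size rest < k)%N by move: szk; rewrite /= size_cat ltnS; lia.
have g_rest p1 B p2 : rest = p1 ++ B ++ p2 -> B != [::] ->
    g (last y p1) (last (last y p1) B) = pweight om (last y p1) B.
  move=> e Bn; have := g_block (v :: pre ++ p1) B p2.
  by rewrite e /= -catA last_cat => /(_ erefl Bn).
have [cs [[sub lcs] szcs blocks tails wcs]] := IH rest y szr rest_new g_rest.
exists (y :: cs); split.
- split; first exact: subseq_last_cons sub.
  by rewrite /= lcs /y last_cat.
- by rewrite pedges_cons pedges_cat /= szcs xv_new count_cat (count_new_old pre_old).
- move=> a b; rewrite pedges_cons in_cons => /orP [/eqP [-> ->] | ab].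
    by exists [::], (v :: pre), rest.
  have [p1 [B [p2 [-> <- <- Bn Bnew]]]] := blocks a b ab.
  by exists (v :: pre ++ p1), B, p2; rewrite /= last_cat -catA.
- move=> a; rewrite in_cons => /orP [/eqP -> _ | a_cs a_last].
    by exists v; rewrite ?pedges_cons ?mem_head.
  have [z az az_new] := tails a a_cs a_last; exists z => //.
  by rewrite pedges_cons in_cons pedges_cat mem_cat az !orbT.
- have := g_block [::] (v :: pre) rest erefl isT; rewrite /= => g_first.
  by rewrite pweight_cons wcs g_first -cat_cons pweight_cat.
Qed.

End Contraction.

Section UnionBefore.
Variables (T : finType) (m : nat).
Implicit Types (f g : 'I_m -> seq T).

Definition union_before f (j : nat) : {set T} :=
  [set x | [exists k : 'I_m, (k < j)%N && (x \in f k)]].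

Lemma union_beforeP f j x :
  reflect (exists2 k : 'I_m, (k < j)%N & x \in f k) (x \in union_before f j).
Proof.
rewrite inE; apply: (iffP existsP) => [[k /andP [kj xk]] | [k kj xk]]; exists k => //.
by rewrite kj.
Qed.

Lemma sub_union_before f (k : 'I_m) j : (k < j)%N -> {subset f k <= union_before f j}.
Proof. by move=> kj x xk; apply/union_beforeP; exists k. Qed.

Lemma union_before_succ f (k : 'I_m) :
  union_before f k.+1 = union_before f k :|: [set x in f k].
Proof.
apply/setP => x; rewrite finset.in_setU finset.in_set; apply/union_beforeP/orP => [[k' + xk'] | ].
  rewrite ltnS leq_eqVlt => /orP [/eqP/val_inj <- | lt]; [by right | left].
  by apply/union_beforeP; exists k'.
case=> [/union_beforeP [k' lt xk'] | xk]; [exists k' => // | by exists k].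
exact: ltn_trans lt _.
Qed.

Lemma card_setU_seq (A : {set T}) (l : seq T) : uniq l ->
  #|A :|: [set x in l]| = (#|A| + count (fun x => x \notin A) l)%N.
Proof.
move=> ul; have -> : A :|: [set x in l] = A :|: [set x in [seq x <- l | x \notin A]].
  by apply/setP => x; rewrite !inE mem_filter; case: (x \in A).
rewrite cardsU (_ : #|_ :&: _| = 0%N) ?subn0; last first.
  by apply: eq_card0 => x; rewrite !inE mem_filter; case: (x \in A).
by rewrite cardsE -size_filter; congr (_ + _)%N; apply/card_uniqP; rewrite filter_uniq.
Qed.

Lemma card_union_before f g :
  (forall k, uniq (f k)) -> (forall k, uniq (g k)) ->
  (forall k : 'I_m, count (fun x => x \notin union_before f k) (f k) =
                    count (fun x => x \notin union_before g k) (g k)) ->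
  #|union_before f m| = #|union_before g m|.
Proof.
move=> uf ug same; suff card_j j : (j <= m)%N -> #|union_before f j| = #|union_before g j|.
  exact: card_j.
elim: j => [_ | j IH jm].
  by rewrite !(@eq_card0 _ (union_before _ 0)) // => x; apply/union_beforeP => -[].
have -> : j = Ordinal jm by [].
by rewrite !union_before_succ !card_setU_seq // IH ?(ltnW jm) // same.
Qed.

End UnionBefore.

Section Reduction.
Variables (R : realType) (n : nat).
Local Notation V := 'I_n.
Variables (E : {set V * V}) (om : V -> V -> R) (P : {set V * V}).
Hypothesis om_gt0 : forall e, e \in E -> 0 < om e.1 e.2.
Hypothesis om_inj : forall s t vs vs', is_spath E s t vs -> is_spath E s t vs' ->
  pweight om s vs = pweight om s vs' -> vs = vs'.
Variable pi : V * V -> seq V.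
Hypothesis pi_spec : forall q, min_spath E om q.1 q.2 (pi q) \/
  ((forall vs, ~~ is_spath E q.1 q.2 vs) /\ pi q = [::]).

Definition demand (k : 'I_#|P|) : V * V := enum_val k.

Definition path_edges (k : 'I_#|P|) : seq (V * V) := pedges (demand k).1 (pi (demand k)).

Local Notation edges_before := (union_before path_edges).

Lemma pi_uniq q : uniq (q.1 :: pi q).
Proof. by case: (pi_spec q) => [[/is_spathP []] | [_ ->]]. Qed.

Lemma pi_walk q : walk E q.1 (pi q).
Proof. by case: (pi_spec q) => [[/is_spathP []] | [_ ->]]. Qed.

Lemma edges_before_sub j : edges_before j \subset E.
Proof.
apply/fintype.subsetP => e /union_beforeP [k _]; exact: walk_edge (pi_walk _).
Qed.

Lemma greedy_preserver (w : V -> V -> R) :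
  (forall s t vs vs', is_spath E s t vs -> is_spath E s t vs' ->
     pweight om s vs <= pweight om s vs' -> pweight w s vs <= pweight w s vs') ->
  is_preserver E w P (edges_before #|P|).
Proof.
move=> om_w; split => [|q qP]; first exact: edges_before_sub.
have sub := edges_before_sub #|P|.
have [[pi_sp pi_min] | [none _]] := pi_spec q; last first.
  rewrite !dist_unreachable // => vs; apply: contraNN (none vs); exact: sub_spath.
have pi_w_min (F : {set V * V}) :
    F \subset E -> is_spath F q.1 q.2 (pi q) -> min_spath F w q.1 q.2 (pi q).
  by move=> FE pi_F; split => // vs /(sub_spath FE) vs_sp; apply: om_w pi_sp vs_sp (pi_min _ vs_sp).
have pi_F : is_spath (edges_before #|P|) q.1 q.2 (pi q).
  case/is_spathP: pi_sp => _ u l; apply/is_spathP; split => //.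
  rewrite /walk path_pedges; apply/allP => -[a b] ab /=.
  have /= := @sub_union_before _ _ path_edges (enum_rank_in qP q) #|P| (ltn_ord _).
  by apply; rewrite /path_edges /demand enum_rankK_in.
by rewrite (min_spath_dist (pi_w_min _ sub pi_F)) (min_spath_dist (pi_w_min _ (subxx _) pi_sp)).
Qed.

Definition wdist (u v : V) : R := fine (dist E om u v).

Lemma wdist_min_spath a b B : min_spath E om a b B -> wdist a b = pweight om a B.
Proof. by move=> /min_spath_dist; rewrite /wdist => ->. Qed.

Local Notation new k := (fun e => e \notin edges_before k).

(* The path [s :: cs] contracts the part of [pi (demand k)] that starts with
   its first new edge; it becomes the [k]-th demand path of the reduced
   instance. *)
Definition contraction (k : 'I_#|P|) (s : V) (cs : seq V) :=
  [/\ size cs = count (new k) (path_edges k),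
      uniq (s :: cs),
      (cs != [::] -> exists vs, [/\ min_spath E om s (last s cs) vs,
        {subset pedges s vs <= path_edges k} & pweight wdist s cs = pweight om s vs]),
      (forall a b, (a, b) \in pedges s cs -> exists B, [/\ min_spath E om a b B,
        has (new k) (pedges a B) & {subset pedges a B <= path_edges k}]) &
      (forall a, a \in s :: cs -> a != last s cs ->
        exists2 z, (a, z) \in path_edges k & (a, z) \notin edges_before k)].

Lemma exists_contraction k : exists s_cs : V * seq V, contraction k s_cs.1 s_cs.2.
Proof.
set s := (demand k).1.
have no_new_edge : count (new k) (path_edges k) = 0%N ->
    exists s_cs : V * seq V, contraction k s_cs.1 s_cs.2.
  move=> no_new; exists (s, [::]); split => //= a.
  by rewrite mem_seq1 => /eqP ->; rewrite eqxx.
have [pi_min | [_ pi_nil]] := pi_spec (demand k); last first.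
  by apply: no_new_edge; rewrite /path_edges pi_nil.
have [old [rest [pi_eq old_old [rest_nil | rest_new]]]] :=
  split_old_prefix (edges_before k) s (pi (demand k)).
  by apply: no_new_edge; rewrite /path_edges -/s pi_eq rest_nil cats0 count_new_old.
set s' := last s old.
have rest_min_spath : min_spath E om s' (last s' rest) rest.
  have := min_spath_infix om_gt0 (x := s) (a := old) (b := rest) (c := [::]).
  by rewrite cats0 -pi_eq => /(_ _ pi_min).
have rest_min p1 B p2 : rest = p1 ++ B ++ p2 ->
    min_spath E om (last s' p1) (last (last s' p1) B) B.
  by move=> rest_eq; move: rest_min_spath; rewrite rest_eq; apply: min_spath_infix.
have rest_sub : {subset pedges s' rest <= path_edges k}.
  by move=> e e_rest; rewrite /path_edges -/s pi_eq pedges_cat mem_cat e_rest orbT.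
have [cs [[cs_sub cs_last] cs_size cs_blocks cs_tails cs_w]] :=
  exists_block_contraction (g := wdist) (om := om) (or_intror rest_new)
    (fun p1 B p2 e _ => wdist_min_spath (rest_min p1 B p2 e)).
exists (s', cs); split => /=.
- by rewrite cs_size /path_edges -/s pi_eq pedges_cat count_cat (count_new_old old_old).
- apply: subseq_uniq (_ : subseq (s' :: cs) (s' :: rest)) _; first by rewrite /= eqxx.
  by case: rest_min_spath => /is_spathP [].
- by move=> _; exists rest; rewrite cs_last.
- move=> a b ab; have [p1 [B [p2 [rest_eq <- <- B_nil B_new]]]] := cs_blocks a b ab.
  exists B; split; first exact: rest_min rest_eq.
  + apply/hasP; exists (last s' p1, head (last s' p1) B) => //.
    by case: (B) B_nil => [//|h B'] _; rewrite pedges_cons mem_head.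
  + by move=> e e_B; apply: rest_sub; rewrite rest_eq !pedges_cat !mem_cat e_B orbT.
- move=> a a_cs a_last; have [z az az_new] := cs_tails a a_cs a_last.
  by exists z => //; apply: rest_sub.
Qed.

Variables (cstart : 'I_#|P| -> V) (cpath : 'I_#|P| -> seq V).
Hypothesis cpathP : forall k, contraction k (cstart k) (cpath k).

Definition cend k := last (cstart k) (cpath k).

Definition cedges k := pedges (cstart k) (cpath k).

Definition contracted_edges : {set V * V} := union_before cedges #|P|.

Definition contracted_pairs : {set V * V} :=
  [set q | [exists k, (cpath k != [::]) && (q == (cstart k, cend k))]].

Lemma contracted_edgesP e : reflect (exists k, e \in cedges k) (e \in contracted_edges).
Proof.
by apply: (iffP (union_beforeP _ _ _)) => [[k _ ek] | [k ek]]; exists k => //; apply: ltn_ord.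
Qed.

Lemma contracted_pairsP q :
  reflect (exists2 k, cpath k != [::] & q = (cstart k, cend k)) (q \in contracted_pairs).
Proof.
rewrite inE; apply: (iffP existsP) => [[k /andP [k_nil /eqP ->]] | [k k_nil ->]].
  by exists k.
by exists k; rewrite k_nil eqxx.
Qed.

Lemma cedge_block k a b : (a, b) \in cedges k -> exists B, [/\ min_spath E om a b B,
  has (new k) (pedges a B) & {subset pedges a B <= path_edges k}].
Proof. by case: (cpathP k) => _ _ _ blocks _; apply: blocks. Qed.

Lemma cedges_lt_disjoint (k k' : 'I_#|P|) e :
  (k < k')%N -> e \in cedges k -> e \notin cedges k'.
Proof.
case: e => a b lt ab; apply/negP => ab'.
have [B [B_min _ B_k]] := cedge_block ab.
have [B' [B'_min /hasP [e0 e0B' e0_new] _]] := cedge_block ab'.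
rewrite -(min_spath_uniq om_inj B_min B'_min) in e0B'.
by rewrite (sub_union_before lt (B_k _ e0B')) in e0_new.
Qed.

Lemma cedges_disjoint (k k' : 'I_#|P|) e :
  k != k' -> e \in cedges k -> e \notin cedges k'.
Proof.
move=> kk'; case: (ltngtP k k') => [lt | gt | eq]; first exact: cedges_lt_disjoint.
  by move=> ek; apply: contraL ek; apply: cedges_lt_disjoint.
by move: kk'; rewrite (val_inj eq) eqxx.
Qed.

Lemma expand_walk x sg : walk contracted_edges x sg -> exists W,
  [/\ walk E x W, last x W = last x sg, pweight om x W = pweight wdist x sg &
      forall a b, (a, b) \in pedges x sg ->
        exists2 B, min_spath E om a b B & {subset pedges a B <= pedges x W}].
Proof.
elim: sg x => [|b sg IH] x; first by exists [::]; rewrite !pweight_nil.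
move=> /andP [/contracted_edgesP [k /cedge_block [B [B_min _ _]]] w_sg].
have [Wr [wWr lWr pWr blocks]] := IH b w_sg.
have [/is_spathP [wB _ lB] _] := B_min.
exists (B ++ Wr); split.
- by rewrite walk_cat wB lB.
- by rewrite last_cat lB lWr.
- by rewrite pweight_cat lB pWr pweight_cons (wdist_min_spath B_min).
move=> a c; rewrite pedges_cons in_cons => /orP [/eqP [-> ->] | ac].
  by exists B => // e eB; rewrite pedges_cat mem_cat eB.
have [B' B'_min B'_sub] := blocks a c ac.
by exists B' => // e /B'_sub eW; rewrite pedges_cat mem_cat lB eW orbT.
Qed.

(* An edge of [sg] leaving a contracted vertex of path [k] must expand into a
   subpath beginning with the new edge of [pi (demand k)] at that vertex, so it
   is an edge of path [k] itself. *)
Lemma sub_cedges k x sg : x \in cstart k :: cpath k ->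
  walk contracted_edges x sg -> uniq (x :: sg) -> last x sg = cend k ->
  (forall a b, (a, b) \in pedges x sg ->
     exists2 B, min_spath E om a b B & {subset pedges a B <= path_edges k}) ->
  {subset pedges x sg <= cedges k}.
Proof.
elim: sg x => [|b sg IH] x // x_k /andP [/contracted_edgesP [k' xb] w_sg].
move=> /andP [x_sg u_sg] l blocks.
have x_end : x != cend k by rewrite -l; apply: contraNneq x_sg => -> /=; apply: mem_last.
have [z xz xz_new] : exists2 z, (x, z) \in path_edges k & (x, z) \notin edges_before k.
  by case: (cpathP k) => _ _ _ _; apply.
have [B B_min B_k] := blocks x b (mem_head _ _).
have [B' [B'_min B'_new B'_k']] := cedge_block xb.
rewrite -(min_spath_uniq om_inj B_min B'_min) in B'_new B'_k'.
have xz_B : (x, z) \in pedges x B.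
  case: B B_min B_k {B'_min B'_new B'_k'} => [[/is_spathP [_ _ xb_eq] _] _ | h B _ B_k].
    by rewrite -xb_eq mem_head in x_sg.
  have xh : (x, h) \in path_edges k by apply: B_k; rewrite pedges_cons mem_head.
  by rewrite -(uniq_pedges_succ (pi_uniq _) xh xz) pedges_cons mem_head.
have k'k : k' = k.
  case: (ltngtP k' k) => [lt | gt | /val_inj //].
    by rewrite (sub_union_before lt (B'_k' _ xz_B)) in xz_new.
  by case/hasP: B'_new => e0 /B_k e0_k; case/negP; exact: (sub_union_before gt e0_k).
subst k'; move=> e; rewrite pedges_cons in_cons => /orP [/eqP -> // | e_sg].
have b_k : b \in cstart k :: cpath k.
  by have [_ b_k] := mem_pedges xb; rewrite in_cons b_k orbT.
apply: (IH b b_k w_sg u_sg l) e_sg => a c ac.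
by apply: blocks; rewrite pedges_cons in_cons ac orbT.
Qed.

Lemma cpath_spath k : is_spath contracted_edges (cstart k) (cend k) (cpath k).
Proof.
apply/is_spathP; split => //; last by case: (cpathP k).
by rewrite /walk path_pedges; apply/allP => -[a b] ab; apply/contracted_edgesP; exists k.
Qed.

Lemma cpath_min_weight k sg : cpath k != [::] ->
  is_spath contracted_edges (cstart k) (cend k) sg ->
  pweight wdist (cstart k) (cpath k) <= pweight wdist (cstart k) sg /\
  (pweight wdist (cstart k) sg <= pweight wdist (cstart k) (cpath k) -> sg = cpath k).
Proof.
move=> k_nil /is_spathP [w_sg u_sg l_sg].
have [vs [vs_min vs_k w_cs]] : exists vs, [/\ min_spath E om (cstart k) (cend k) vs,
    {subset pedges (cstart k) vs <= path_edges k} &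
    pweight wdist (cstart k) (cpath k) = pweight om (cstart k) vs].
  by case: (cpathP k) => _ _ h _ _; apply: h.
have [W [wW lW pW blocks]] := expand_walk w_sg.
rewrite -pW w_cs; rewrite -l_sg -lW in vs_min.
split=> [|le]; first exact: (min_spath_le_walk om_gt0 wW vs_min).
have W_vs := walk_eq_min_spath om_gt0 om_inj wW vs_min le; subst W.
apply: (sub_pedges_eq u_sg); [by case: (cpathP k) | by rewrite l_sg | ].
apply: sub_cedges (mem_head _ _) w_sg u_sg l_sg _ => a b ab.
by have [B B_min B_W] := blocks a b ab; exists B => // e /B_W /vs_k.
Qed.

Lemma dist_cpath k : cpath k != [::] ->
  dist contracted_edges wdist (cstart k) (cend k) = (pweight wdist (cstart k) (cpath k))%:E.
Proof.
move=> k_nil; apply: min_spath_dist; split; first exact: cpath_spath.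
by move=> sg /(cpath_min_weight k_nil) [].
Qed.

Lemma shortest_cpath k vs : cpath k != [::] ->
  is_shortest contracted_edges wdist (cstart k) (cend k) vs -> vs = cpath k.
Proof.
move=> k_nil [vs_sp]; rewrite dist_cpath // => -[w_eq].
by have [_] := cpath_min_weight k_nil vs_sp; apply; rewrite w_eq.
Qed.

Lemma contracted_independent : independent contracted_edges wdist contracted_pairs.
Proof.
split=> [q /contracted_pairsP [k k_nil ->] | q q'].
  exists (cpath k); split; last by move=> vs; apply: shortest_cpath.
  by split; [exact: cpath_spath | rewrite dist_cpath].
move=> /contracted_pairsP [k k_nil ->] /contracted_pairsP [k' k'_nil ->] qq' vs vs'.
move=> /(shortest_cpath k_nil) -> /(shortest_cpath k'_nil) -> e e_k.
by apply: cedges_disjoint e_k; apply: contraNneq qq' => ->.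
Qed.

Lemma contracted_edges_sub_preserver F :
  is_preserver contracted_edges wdist contracted_pairs F -> contracted_edges \subset F.
Proof.
move=> [FE F_dist]; apply/fintype.subsetP => e /contracted_edgesP [k e_k].
have k_nil : cpath k != [::] by apply: contraTneq e_k; rewrite /cedges => ->.
have /F_dist : (cstart k, cend k) \in contracted_pairs by apply/contracted_pairsP; exists k.
rewrite /= dist_cpath //.
have [[sg sg_F] | none] := pselect (exists sg, is_spath F (cstart k) (cend k) sg); last first.
  by rewrite dist_unreachable // => sg; apply/negP => sg_F; apply: none; exists sg.
have [sg0 sg0_min] := exists_min_spath wdist sg_F; have [sg0_F _] := sg0_min.
rewrite (min_spath_dist sg0_min) => -[w_eq].
have [_] := cpath_min_weight k_nil (sub_spath FE sg0_F).
rewrite w_eq lexx => /(_ isT) sg0_eq.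
by case/is_spathP: sg0_F => w_sg0 _ _; apply: walk_edge w_sg0 _; rewrite sg0_eq.
Qed.

Lemma contracted_nonneg : nonneg_weights contracted_edges wdist.
Proof.
move=> [a b] /contracted_edgesP [k /cedge_block [B [B_min _ _]]] /=.
rewrite (wdist_min_spath B_min); apply: pweight_ge0 (fun e eE => ltW (om_gt0 eE)) _.
by case: B_min => /is_spathP [].
Qed.

Lemma card_contracted_edges : #|contracted_edges| = #|edges_before #|P| |.
Proof.
apply: card_union_before => k.
- by case: (cpathP k) => _ u _ _ _; apply: uniq_pedges.
- exact/uniq_pedges/pi_uniq.
rewrite (@eq_in_count _ _ predT) ?count_predT ?size_pedges; first by case: (cpathP k).
move=> e e_k /=; apply/negP => /union_beforeP [k' lt e_k'].
by move: (cedges_lt_disjoint lt e_k'); rewrite e_k.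
Qed.

Lemma card_contracted_pairs : (#|contracted_pairs| <= #|P|)%N.
Proof.
have sub : contracted_pairs \subset (fun k => (cstart k, cend k)) @: [set: 'I_#|P|].
  by apply/fintype.subsetP => q /contracted_pairsP [k _ ->]; apply: imset_f.
apply: leq_trans (subset_leq_card sub) _.
by rewrite (leq_trans (leq_imset_card _ _)) // cardsT card_ord.
Qed.

End Reduction.

Section IndependentReduction.
Variables (R : realType) (n : nat).
Local Notation V := 'I_n.

Lemma independent_reduction (E : {set V * V}) (w : V -> V -> R) (P : {set V * V}) :
  nonneg_weights E w -> exists2 F, is_preserver E w P F &
    exists (E' : {set V * V}) (w' : V -> V -> R) (P' : {set V * V}),
      [/\ nonneg_weights E' w', (#|P'| <= #|P|)%N, independent E' w' P',
          forall F', is_preserver E' w' P' F' -> E' \subset F' & #|E'| = #|F|].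
Proof.
move=> w_ge0; have [om [om_gt0 om_w om_inj]] := tie_breaking_weights w_ge0.
have shortest_or_none q : exists pi_q,
    min_spath E om q.1 q.2 pi_q \/ ((forall vs, ~~ is_spath E q.1 q.2 vs) /\ pi_q = [::]).
  have [[vs vs_sp] | none] := pselect (exists vs, is_spath E q.1 q.2 vs).
    by have [vs0 vs0_min] := exists_min_spath om vs_sp; exists vs0; left.
  by exists [::]; right; split => // vs; apply/negP => vs_sp; apply: none; exists vs.
have [pi pi_spec] := boolp.choice shortest_or_none.
have [D DP] := boolp.choice (exists_contraction (P := P) om_gt0 pi_spec).
pose cstart k := (D k).1; pose cpath k := (D k).2.
have cpathP k : contraction E om pi k (cstart k) (cpath k) by apply: DP.
exists (union_before (@path_edges _ P pi) #|P|); first exact: greedy_preserver.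
exists (contracted_edges cstart cpath), (wdist E om), (contracted_pairs cstart cpath); split.
- exact (contracted_nonneg om_gt0 cpathP).
- exact: card_contracted_pairs.
- exact (contracted_independent om_gt0 om_inj pi_spec cpathP).
- exact (contracted_edges_sub_preserver om_gt0 om_inj pi_spec cpathP).
- exact (card_contracted_edges om_inj pi_spec cpathP).
Qed.

Lemma DP_bound_DP p : DP_bound R n p (DP R n p).
Proof. by rewrite /DP; case: ex_minnP => d /asboolP. Qed.

Lemma DP_extremal_instance p : (0 < DP R n p)%N ->
  exists (E : {set V * V}) (w : V -> V -> R) (P : {set V * V}),
    [/\ nonneg_weights E w, #|P| = p &
        forall F : {set V * V}, is_preserver E w P F -> (DP R n p <= #|F|)%N].
Proof.
rewrite /DP; case: ex_minnP => d _ d_min d_gt0; apply: contrapT => none.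
suff : (d <= d.-1)%N by rewrite leqNgt ltn_predL d_gt0.
apply: d_min; apply/asboolP => E w P w_ge0 P_card; apply: contrapT => no_F.
apply: none; exists E, w, P; split => // F F_pres; rewrite leqNgt; apply/negP => lt.
by apply: no_F; exists F; split => //; rewrite -ltnS prednK.
Qed.

End IndependentReduction.

Theorem lemma4p3 (R : realType) (n p : nat) :
  (0 < n)%N -> (0 < p)%N ->
  exists (E : {set 'I_n * 'I_n}) (w : 'I_n -> 'I_n -> R) (P : {set 'I_n * 'I_n}),
    [/\ nonneg_weights E w, (#|P| <= p)%N, independent E w P,
        (exists F, is_preserver E w P F /\ #|F| = DP R n p)
      & forall F, is_preserver E w P F -> (DP R n p <= #|F|)%N].
Proof.
move=> _ _; have [DP_eq0 | DP_gt0] := posnP (DP R n p).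
  exists finset.set0, (fun _ _ => 0), finset.set0; rewrite DP_eq0 cards0; split => //.
  - by split => q; rewrite inE.
  - by exists finset.set0; rewrite cards0; split => //; split => // q; rewrite inE.
have [E0 [w0 [P0 [w0_ge0 P0_card P0_hard]]]] := DP_extremal_instance DP_gt0.
have [H [H_pres H_card]] := DP_bound_DP w0_ge0 P0_card.
have [F F_pres [E' [w' [P' [w'_ge0 P'_card P'_indep P'_full E'_card]]]]] :=
  independent_reduction P0 (nonneg_weights_sub H_pres.1 w0_ge0).
have F_card : #|F| = DP R n p.
  apply/eqP; rewrite eqn_leq P0_hard ?andbT; last exact: preserver_trans H_pres F_pres.
  by apply: leq_trans H_card; apply: subset_leq_card F_pres.1.
exists E', w', P'; split => //.
- by rewrite -P0_card.
- by exists E'; rewrite E'_card F_card; split => //; split => //; apply: subxx.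
- by move=> F' /P'_full/subset_leq_card; rewrite E'_card F_card.
Qed.
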